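(* Let $G=(V,E)$ be a finite simple graph of order $n$ and let $T=n-1$. If $(x,y,z)$ is an optimal solution of the integer program with the constraints of the Time Step Model $\mathrm{TSM}(G,T)$ and objective ''minimize $\sum_{v\in V}x^0_v+\frac{1}{2T}\sum_{t\in[T]}z^t$'', then $C=\{v\in V\colon x^0_v=1\}$ is a minimum zero forcing set of $G$ with $\mathrm{pt}(G)=\mathrm{pt}(G,C)=\sum_{t\in[T]}z^t$.
   Context: Zero forcing: under the standard color change rule a filled vertex $u$ can force a non-filled vertex $v$ if $v$ is the only non-filled neighbor of $u$; $C\subseteq V$ is a zero forcing set if, starting with $C$ filled and repeatedly forcing, all of $V$ becomes filled; a minimum zero forcing set is one of minimum size. The propagation time $\mathrm{pt}(G,C)$ is the smallest $t^*$ such that, starting from $C^{[0]}=C$ and setting $C^{[t]}=C^{[t-1]}\cup\{v\notin C^{[t-1]}\colon$ some $u\in C^{[t-1]}$ has $v$ as its only neighbor outside $C^{[t-1]}\}$, one has $C^{[t^*]}=V$ ($\infty$ if $C$ is not a zero forcing set). $\mathrm{pt}(G)=\min\{\mathrm{pt}(G,C)\colon C$ a minimum zero forcing set$\}$. $N(u)$ is the neighborhood of $u$ and $d(u)=|N(u)|$. Time Step Model constraints: $A$ is the set of arcs containing $(u,v)$ and $(v,u)$ for each edge $\{u,v\}$, $[T]=\{1,\dots,T\}$. Binary variables $x^t_v$ ($v\in V$, $t\in\{0,\dots,T\}$), $y^t_a$ ($a\in A$, $t\in[T]$), $z^t$ ($t\in[T]$), with constraints: (1) $x^0_v+\sum_{t\in[T]}\sum_{a=(u,v)\in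 A}y^t_a=1$ for all $v$; (2) $y^t_a\leq x^{t-1}_u$ for all $a=(u,v)\in A$, $t\in[T]$; (3) $y^t_a\leq x^{t-1}_w$ for all $a=(u,v)\in A$, $w\in N(u)\setminus\{v\}$, $t\in[T]$; (4) $x^t_v=x^{t-1}_v+\sum_{a=(u,v)\in A}y^t_a$ for all $v$, $t\in[T]$; (5) $x^{t-1}_u-x^{t-1}_v+\sum_{w\in N(u)\setminus\{v\}}x^{t-1}_w\leq\sum_{a=(w,v)\in A}y^t_a+d(u)-1$ for all $(u,v)\in A$, $t\in[T]$; (6) $\frac1n\sum_{v\in V}(x^t_v-x^{t-1}_v)-z^t\leq0$ for all $t\in[T]$; (7) $z^t-\sum_{v\in V}(x^t_v-x^{t-1}_v)\leq 0$ for all $t\in[T]$. *)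

From HB Require Import structures.
From mathcomp Require Import all_boot all_order all_algebra.
Set Implicit Arguments. Unset Strict Implicit. Unset Printing Implicit Defensive.
Import Order.TTheory GRing.Theory Num.Theory.

Definition simple_graph (V : finType) (e : rel V) : Prop :=
  symmetric e /\ irreflexive e.

Section ZF.
Variables (V : finType) (e : rel V).

Definition nbhd (u : V) : {set V} := [set w | e u w].
Definition deg (u : V) : nat := #|nbhd u|.

Definition force_step (C : {set V}) : {set V} :=
  C :|: [set v | (v \notin C) &&
                 [exists u, (u \in C) && (nbhd u :\: C == [set v])]].

Definition filled (C : {set V}) (t : nat) : {set V} := iter t force_step C.

Definition zero_forcing_set (C : {set V}) : Prop :=
  exists t, filled C t = [set: V].

Definition min_zero_forcing_set (C : {set V}) : Prop :=
  zero_forcing_set C /\ forall D : {set V}, zero_forcing_set D -> #|C| <= #|D|.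

Definition pt_set_is (C : {set V}) (k : nat) : Prop :=
  filled C k = [set: V] /\ forall j, j < k -> filled C j != [set: V].

Definition pt_graph_is (k : nat) : Prop :=
  (exists2 C, min_zero_forcing_set C & pt_set_is C k) /\
  forall C j, min_zero_forcing_set C -> pt_set_is C j -> k <= j.

(* Binary variables: x t v (t = 0..T), y t u v for the arc (u,v) (t = 1..T),
   z t (t = 1..T); values outside these index ranges / non-arcs are unused. *)
Local Open Scope ring_scope.

Definition b2i (b : bool) : int := (nat_of_bool b)%:Z.
Definition b2q (b : bool) : rat := (nat_of_bool b)%:R.

Definition TSM_feasible (T : nat)
    (x : nat -> V -> bool) (y : nat -> V -> V -> bool) (z : nat -> bool) : Prop :=
  (forall v, (x 0%N v + \sum_(1 <= t < T.+1) \sum_(u | e u v) y t u v = 1)%N) /\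
  (forall u v t, e u v -> (1 <= t <= T)%N -> (y t u v <= x t.-1 u)%N) /\
  (forall u v w t, e u v -> w \in nbhd u -> w != v -> (1 <= t <= T)%N ->
      (y t u v <= x t.-1 w)%N) /\
  (forall v t, (1 <= t <= T)%N ->
      (x t v : nat) = (x t.-1 v + \sum_(u | e u v) y t u v)%N) /\
  (forall u v t, e u v -> (1 <= t <= T)%N ->
      b2i (x t.-1 u) - b2i (x t.-1 v) + \sum_(w in nbhd u :\ v) b2i (x t.-1 w)
      <= \sum_(w | e w v) b2i (y t w v) + (deg u)%:Z - 1) /\
  (forall t, (1 <= t <= T)%N ->
      (#|V|%:R)^-1 * \sum_v (b2q (x t v) - b2q (x t.-1 v)) - b2q (z t) <= 0) /\
  (forall t, (1 <= t <= T)%N ->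
      b2q (z t) - \sum_v (b2q (x t v) - b2q (x t.-1 v)) <= 0).

Definition TSM_objective (T : nat)
    (x : nat -> V -> bool) (z : nat -> bool) : rat :=
  \sum_v b2q (x 0%N v) + (2 * T%:R)^-1 * \sum_(1 <= t < T.+1) b2q (z t).

Definition TSM_optimal (T : nat) x y z : Prop :=
  TSM_feasible T x y z /\
  forall x' y' z', TSM_feasible T x' y' z' ->
    TSM_objective T x z <= TSM_objective T x' z'.

End ZF.

(* By (2)-(5), a feasible solution of TSM(G, n-1) replays zero forcing from
   C = {v : x^0_v = 1}: x^t is the set filled after t steps, and (1) with (4)
   says that everything is filled at time T, so C is a zero forcing set.
   By (6)-(7), z^t records whether step t forces anything, hence
   sum_t z^t = pt(G, C).  Conversely, every zero forcing set D induces a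
   feasible solution of objective |D| + pt(G, D)/(2T).  As pt(G, D) <= T, the
   second term is at most 1/2, so an optimal solution minimises |C| first and
   pt(G, C) second. *)

From HB Require Import structures.
From mathcomp Require Import all_boot all_order all_algebra zify.
Set Implicit Arguments. Unset Strict Implicit. Unset Printing Implicit Defensive.
Import Order.TTheory GRing.Theory Num.Theory.

Lemma subset_card_ltE (T : finType) (A B : {set T}) :
  A \subset B -> (#|A| < #|B|)%N = (A != B).
Proof.
by move=> AB; have := properEcard A B; rewrite properEneq AB !andbT => ->.
Qed.

Lemma telescope_nat (f g : nat -> nat) n :
  (forall t, 1 <= t <= n -> f t = f t.-1 + g t) ->
  forall t, t <= n -> f t = f 0 + \sum_(1 <= s < t.+1) g s.
Proof.
move=> f_step; elim=> [|t IHt] tn; first by rewrite big_geq ?addn0.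
by rewrite big_nat_recr //= addnA -IHt 1?ltnW // f_step.
Qed.

Lemma sum_bool_gt0 (I : finType) (P : pred I) (b : I -> bool) :
  (0 < \sum_(i | P i) b i)%N = [exists i, P i && b i].
Proof.
rewrite lt0n sum_nat_eq0 negb_forall; apply: eq_existsb => i.
by case: (P i); case: (b i).
Qed.

Section Propagation.
Variables (V : finType) (e : rel V).
Local Notation fs := (force_step e).
Local Notation F := (filled e).

Definition forces (A : {set V}) (u v : V) : bool :=
  (u \in A) && (nbhd e u :\: A == [set v]).

Lemma forces_notin A u v : forces A u v -> v \notin A.
Proof. by case/andP=> _ /eqP NuA; have := set11 v; rewrite -NuA inE => /andP[]. Qed.

Lemma forces_edge A u v : forces A u v -> e u v.
Proof. by case/andP=> _ /eqP NuA; have := set11 v; rewrite -NuA !inE => /andP[]. Qed.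

Lemma forces_nbhd (A : {set V}) u v : e u v ->
  forces A u v = [&& u \in A, v \notin A & nbhd e u :\ v \subset A].
Proof.
move=> euv; rewrite /forces; congr (_ && _).
apply/eqP/andP => [NA | [vA NvA]].
  split; first by have := set11 v; rewrite -NA inE => /andP[].
  apply/subsetP => w; rewrite !inE => /andP[wv euw]; apply: contraR wv => wA.
  have : w \in nbhd e u :\: A by rewrite !inE wA euw.
  by rewrite NA inE.
apply/setP => w; rewrite !inE; case: (eqVneq w v) => [-> | wv] /=.
  by rewrite vA euv.
by case euw: (e u w); rewrite ?andbF // (subsetP NvA) // !inE wv euw.
Qed.

Lemma in_force_step (A : {set V}) v :
  (v \in fs A) = (v \in A) || [exists u, forces A u v].
Proof. by rewrite !inE; case: (v \in A). Qed.

Lemma force_step_sub (A : {set V}) : A \subset fs A.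
Proof. exact: subsetUl. Qed.

Lemma force_stepT : fs setT = setT.
Proof. by apply/setP => v; rewrite in_force_step !inE. Qed.

Lemma filledS C t : F C t.+1 = fs (F C t).
Proof. by []. Qed.

Lemma filled_monotone C s t : s <= t -> F C s \subset F C t.
Proof.
move=> /subnK <-; elim: (t - s) => [|k IHk]; first by rewrite add0n.
by rewrite addSn filledS (subset_trans IHk) ?force_step_sub.
Qed.

Lemma filled_stable C t s : F C t.+1 = F C t -> t <= s -> F C s = F C t.
Proof.
move=> Ht /subnK <-; elim: (s - t) => [|k IHk] //.
by rewrite addSn filledS IHk.
Qed.

Lemma filled_full C t s : F C t = setT -> t <= s -> F C s = setT.
Proof.
by move=> Ht; rewrite -Ht; apply: filled_stable; rewrite filledS Ht force_stepT.
Qed.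

Lemma filled_set0 t : F set0 t = set0.
Proof.
elim: t => [|t IHt] //; apply/setP => v.
by rewrite filledS IHt in_force_step inE; apply/existsP => -[u]; rewrite /forces inE.
Qed.

Lemma pt_set_exists C n : F C n = setT -> exists j, pt_set_is e C j.
Proof.
move=> Hn; have exT : exists t, F C t == setT by exists n; apply/eqP.
case: (ex_minnP exT) => j /eqP Hj j_min; exists j; split=> // k.
by apply: contraTN => /j_min; rewrite leqNgt.
Qed.

Lemma pt_set_le C j n : pt_set_is e C j -> F C n = setT -> j <= n.
Proof.
by case=> _ j_min Hn; rewrite leqNgt; apply/negP => /j_min; rewrite Hn eqxx.
Qed.

Lemma filled_step_proper C j k :
  pt_set_is e C j -> k < j -> F C k \proper F C k.+1.
Proof.
case=> Hj j_min kj; rewrite properEneq filled_monotone // andbT.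
apply/eqP=> /esym Hk; have := j_min k kj.
by rewrite -(filled_stable Hk (ltnW kj)) Hj eqxx.
Qed.

Lemma pt_set_card C j : pt_set_is e C j -> #|C| + j <= #|V|.
Proof.
move=> ptj; have grow k : k <= j -> #|C| + k <= #|F C k|.
  elim: k => [|k IHk] kj; first by rewrite addn0.
  rewrite addnS (leq_ltn_trans (IHk (ltnW kj))) //.
  exact/proper_card/(filled_step_proper ptj).
by have := grow j (leqnn j); case: ptj => -> _; rewrite cardsT.
Qed.

Lemma zero_forcing_within C : zero_forcing_set e C -> F C #|V|.-1 = setT.
Proof.
case=> n /pt_set_exists [j ptj]; have Cj := pt_set_card ptj.
case: ptj => Hj j_min; apply: (filled_full Hj).
have [C0 | ] := eqVneq C set0.
  case: j j_min Hj {Cj} => // j j_min; rewrite C0 filled_set0 => /esym T0.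
  by have := j_min 0 isT; rewrite /= C0 T0 eqxx.
by rewrite -card_gt0; lia.
Qed.

Definition productive_steps C n : nat :=
  \sum_(1 <= t < n.+1) (F C t != F C t.-1).

Lemma productive_steps_le C n : productive_steps C n <= n.
Proof.
apply: (@leq_trans (\sum_(1 <= t < n.+1) 1)); last first.
  by rewrite sum_nat_const_nat muln1 subn1.
by apply: leq_sum => t _; apply: leq_b1.
Qed.

Lemma productive_steps_pt C j n :
  pt_set_is e C j -> F C n = setT -> productive_steps C n = j.
Proof.
move=> ptj Hn; have jn := pt_set_le ptj Hn; case: (ptj) => Hj _.
rewrite /productive_steps (@big_cat_nat _ _ _ j.+1) //=.
rewrite [X in _ + X]big1_seq ?addn0 => [|t /andP[_]]; last first.
  rewrite mem_index_iota => /andP[jt _].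
  by rewrite !(filled_full Hj) ?eqxx //; lia.
rewrite (@eq_big_nat _ _ _ _ _ _ (fun=> 1)) ?sum_nat_const_nat ?muln1 ?subn1 //.
move=> t /andP[t1 tj].
have tj' : t.-1 < j by rewrite prednK.
by have := proper_neq (filled_step_proper ptj tj'); rewrite prednK // eq_sym => ->.
Qed.

End Propagation.

Local Open Scope ring_scope.

Section BooleanSums.
Variable V : finType.

Lemma sum_b2i (P : pred V) (f : V -> bool) :
  \sum_(w | P w) b2i (f w) = (\sum_(w | P w) (f w : nat))%N%:Z.
Proof. by rewrite -natz natr_sum; apply: eq_bigr => w _; rewrite natz. Qed.

Lemma sum_b2i_card (A : {set V}) (f : V -> bool) :
  \sum_(w in A) b2i (f w) = #|[set w in A | f w]|%:Z.
Proof.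
rewrite sum_b2i -sum1dep_card big_mkcondr /=.
by congr _%:Z; apply: eq_bigr => w _; case: (f w).
Qed.

Lemma sum_b2q_card (A : {set V}) : \sum_v b2q (v \in A) = #|A|%:R.
Proof.
rewrite -natr_sum -sum1_card [in RHS]big_mkcond /=.
by congr _%:R; apply: eq_bigr => w _; case: (w \in A).
Qed.

Lemma sum_b2q_subset (A B : {set V}) : A \subset B ->
  \sum_v (b2q (v \in B) - b2q (v \in A)) = (#|B| - #|A|)%N%:R.
Proof. by move=> AB; rewrite sumrB !sum_b2q_card natrB ?subset_leq_card. Qed.

End BooleanSums.

(* With k the number of vertices filled at step t, (6) and (7) say exactly
   that z^t is the indicator of k > 0. *)
Lemma tsm_indicator (n k : nat) (b : bool) : (0 < n)%N -> (k <= n)%N ->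
  ((n%:R^-1 * k%:R - b2q b <= 0 :> rat) /\ b2q b - k%:R <= 0) <-> b = (0 < k)%N.
Proof.
move=> n0 kn; have n0' : (0 : rat) < n%:R by rewrite ltr0n.
rewrite /b2q !subr_le0 ler_pdivrMl // ler_nat; case: b => /=.
  rewrite mulr1 ler_nat kn; split=> [[_ k1] | <-] //; by rewrite lt0n -lt0n.
rewrite mulr0 lern0 lt0n; split=> [[/eqP -> _] | ] //.
by move/esym/negbFE/eqP => ->.
Qed.

Section Constraint5.
Variables (V : finType) (e : rel V).

Definition tsm5_lhs (f : V -> bool) (u v : V) : int :=
  b2i (f u) - b2i (f v) + \sum_(w in nbhd e u :\ v) b2i (f w).

Lemma tsm5_lhs_bound (f : V -> bool) u v : e u v ->
  let A := [set w | f w] in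
  tsm5_lhs f u v <= (deg e u)%:Z - 1 + b2i (forces e A u v) /\
  (forces e A u v -> tsm5_lhs f u v = (deg e u)%:Z).
Proof.
move=> euv A; set N := nbhd e u :\ v; set S := [set w in N | f w].
have degE : deg e u = (#|N| + 1)%N by rewrite /deg (cardsD1 v) inE euv addnC.
have SN : S \subset N by apply/subsetP => w; rewrite inE => /andP[].
have [leSN] := subset_leqif_cards SN.
have -> : (S == N) = (N \subset A).
  apply/eqP/subsetP => [<- w | NA]; first by rewrite !inE => /andP[].
  by apply/setP => w; rewrite inE; case wN: (w \in N); rewrite //= -[f w]inE NA.
rewrite /tsm5_lhs sum_b2i_card forces_nbhd // !inE degE -/S /b2i => eqSN.
by case: (f u); case: (f v); case: (N \subset A) eqSN => /= eqSN; split; lia.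
Qed.

End Constraint5.

Section FeasibleSolution.
Variables (V : finType) (e : rel V).
Variables (x : nat -> V -> bool) (y : nat -> V -> V -> bool) (z : nat -> bool).
Local Notation T := #|V|.-1.
Hypothesis feas : TSM_feasible e T x y z.
Local Notation X t := [set v | x t v].

Lemma tsm_x_step v t : (1 <= t <= T)%N ->
  x t v = x t.-1 v || (0 < \sum_(u | e u v) y t u v)%N.
Proof.
case: feas => _ [_ [_ [x_step _]]] /(x_step v).
by move: (\sum_(u | e u v) _)%N => S; case: (x t v); case: (x t.-1 v) => /=; lia.
Qed.

Lemma tsm_x_sub_force_step t :
  (1 <= t <= T)%N -> X t \subset force_step e (X t.-1).
Proof.
case: feas => _ [y_x [y_xN _]] tT; apply/subsetP => v.
rewrite in_force_step !inE (tsm_x_step v tT) sum_bool_gt0.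
case: (boolP (x t.-1 v)) => [// | xt1v]; rewrite !orFb => /existsP[u /andP[euv yuv]].
apply/existsP; exists u; rewrite /forces inE.
have -> /= : x t.-1 u by have := y_x u v t euv tT; rewrite yuv; case: (x _ u).
apply/eqP/setP => w; rewrite !inE; case: (eqVneq w v) => [-> | wv].
  by rewrite xt1v euv.
case euw: (e u w); rewrite ?andbF //.
by have := y_xN u v w t euv; rewrite inE euw wv yuv => /(_ isT isT tT); case: (x _ w).
Qed.

Lemma force_step_sub_tsm_x t :
  (1 <= t <= T)%N -> force_step e (X t.-1) \subset X t.
Proof.
case: feas => _ [_ [_ [_ [x_forced _]]]] tT; apply/subsetP => v.
rewrite in_force_step !inE (tsm_x_step v tT) => /orP[-> // | /existsP[u fuv]].
have euv := forces_edge fuv.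
have [_ /(_ fuv) lhsE] := tsm5_lhs_bound (x t.-1) euv.
have := x_forced u v t euv tT; rewrite -/(tsm5_lhs e (x t.-1) u v) lhsE sum_b2i.
move: (\sum_(w | e w v) _)%N (deg e u) => S d lt0S.
by apply/orP; right; clear -lt0S; lia.
Qed.

Lemma tsm_x_filled t : (t <= T)%N -> X t = filled e (X 0) t.
Proof.
elim: t => [|t IHt] // tT.
rewrite filledS -IHt; last exact: ltnW.
have tT' : (1 <= t.+1 <= T)%N by [].
apply/eqP; rewrite eqEsubset.
by rewrite (tsm_x_sub_force_step tT') (force_step_sub_tsm_x tT').
Qed.

Lemma tsm_x_full : filled e (X 0) T = setT.
Proof.
rewrite -tsm_x_filled //; apply/setP => v; rewrite !inE.
case: feas => x_once [_ [_ [x_step _]]].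
have := telescope_nat (x_step v) (leqnn T).
by rewrite x_once; case: (x T v).
Qed.

Lemma tsm_z_productive t : (1 <= t <= T)%N ->
  z t = (filled e (X 0) t != filled e (X 0) t.-1).
Proof.
move=> tT.
have Fsub : filled e (X 0) t.-1 \subset filled e (X 0) t.
  exact/filled_monotone/leq_pred.
case: feas => _ [_ [_ [_ [_ [z_lb z_ub]]]]].
set A := filled e (X 0) t.-1; set B := filled e (X 0) t.
have xE s v : (s <= T)%N -> x s v = (v \in filled e (X 0) s).
  by move=> sT; rewrite -tsm_x_filled // inE.
have sumE : \sum_v (b2q (x t v) - b2q (x t.-1 v)) = (#|B| - #|A|)%N%:R :> rat.
  rewrite -sum_b2q_subset //; apply: eq_bigr => v _.
  by case/andP: tT => _ tT; rewrite !xE // (leq_trans (leq_pred t)).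
have BAn : (#|B| - #|A| <= #|V|)%N by rewrite (leq_trans (leq_subr _ _)) ?max_card.
have n0 : (0 < #|V|)%N.
  by case/andP: tT => t1 tn; apply: leq_trans t1 (leq_trans tn (leq_pred _)).
have [zE _] := tsm_indicator (z t) n0 BAn.
by rewrite zE -?sumE ?z_lb ?z_ub // subn_gt0 subset_card_ltE // eq_sym.
Qed.

End FeasibleSolution.

Section InducedSolution.
Variables (V : finType) (e : rel V) (D : {set V}).
Local Notation T := #|V|.-1.
Local Notation F := (filled e D).

Definition zf_x t v : bool := v \in F t.
(* Each newly filled vertex is credited to a single forcing vertex. *)
Definition zf_y t u v : bool := [pick w | forces e (F t.-1) w v] == Some u.
Definition zf_z t : bool := F t != F t.-1.

Lemma zf_y_forces t u v : zf_y t u v -> forces e (F t.-1) u v.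
Proof. by rewrite /zf_y; case: pickP => // w fwv /eqP[<-]. Qed.

Lemma sum_zf_y t v : (0 < t)%N ->
  (\sum_(u | e u v) zf_y t u v)%N = (v \in F t) && (v \notin F t.-1).
Proof.
move=> t0; have -> : F t = force_step e (F t.-1) by rewrite -filledS prednK.
rewrite in_force_step /zf_y; case: pickP => [w fwv | no_forcing]; last first.
  have -> : [exists u, forces e (F t.-1) u v] = false.
    by apply/existsP => -[u]; rewrite no_forcing.
  by rewrite orbF andbN big1 // => u _; case: eqP.
have -> : [exists u, forces e (F t.-1) u v] by apply/existsP; exists w.
rewrite (negPf (forces_notin fwv)) (bigD1 w) ?(forces_edge fwv) //= eqxx.
by rewrite big1 // => u /andP[_ uw]; case: eqP => // -[wu]; rewrite wu eqxx in uw.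
Qed.

Lemma zf_x_step v t : (0 < t)%N ->
  (zf_x t v : nat) = (zf_x t.-1 v + \sum_(u | e u v) zf_y t u v)%N.
Proof.
move=> t0; rewrite sum_zf_y // /zf_x.
have := subsetP (filled_monotone e D (leq_pred t)) v.
by case: (v \in F t.-1) => [-> | _]; last case: (v \in F t).
Qed.

Hypothesis full : F T = setT.

Lemma zf_feasible : TSM_feasible e T zf_x zf_y zf_z.
Proof.
have count t : (1 <= t <= T)%N ->
    \sum_v (b2q (zf_x t v) - b2q (zf_x t.-1 v))
    = (#|F t| - #|F t.-1|)%N%:R :> rat.
  by move=> _; apply/sum_b2q_subset/filled_monotone/leq_pred.
have z67 t : (1 <= t <= T)%N ->
    (#|V|%:R^-1 * (#|F t| - #|F t.-1|)%N%:R - b2q (zf_z t) <= 0 :> rat) /\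
    b2q (zf_z t) - (#|F t| - #|F t.-1|)%N%:R <= 0.
  case/andP=> t1 tT; apply/tsm_indicator.
  - by apply: leq_trans t1 (leq_trans tT (leq_pred _)).
  - by rewrite (leq_trans (leq_subr _ _)) ?max_card.
  - by rewrite subn_gt0 /zf_z eq_sym subset_card_ltE ?filled_monotone ?leq_pred.
split.
  move=> v.
  have x_step t (tT : (1 <= t <= T)%N) := zf_x_step v (elimT andP tT).1.
  have := telescope_nat x_step (leqnn T).
  by rewrite {1}/zf_x full inE => <-.
split.
  move=> u v t _ _; case yuv: (zf_y t u v) => //.
  by have /andP[xu _] := zf_y_forces yuv; rewrite /zf_x xu.
split.
  move=> u v w t _ wN wv _; case yuv: (zf_y t u v) => //.
  have /andP[_ /eqP NuF] := zf_y_forces yuv.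
  case: (boolP (zf_x t.-1 w)) => // xw.
  have : w \in nbhd e u :\: F t.-1 by rewrite inE xw.
  by rewrite NuF inE (negPf wv).
split; first by move=> v t /andP[t1 _]; exact: zf_x_step.
split.
  move=> u v t euv /andP[t1 _]; have [le5 _] := tsm5_lhs_bound (zf_x t.-1) euv.
  have setE : [set w | zf_x t.-1 w] = F t.-1 by apply/setP => w; rewrite inE.
  rewrite setE in le5; apply: le_trans le5 _; rewrite sum_b2i sum_zf_y //.
  case: (boolP (forces e (F t.-1) u v)) => [fuv | _]; last first.
    by rewrite /b2i; clear count z67; lia.
  have -> : (v \in F t) && (v \notin F t.-1).
    rewrite (forces_notin fuv) andbT -(prednK t1) filledS in_force_step.
    by apply/orP; right; apply/existsP; exists u.
  by rewrite /b2i; clear count z67; lia.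
by split=> t tT; rewrite count //; case: (z67 t tT).
Qed.

End InducedSolution.

Lemma tsm_objective_productive (V : finType) (e : rel V) n
    (x : nat -> V -> bool) (z : nat -> bool) (C : {set V}) :
  (forall v, x 0%N v = (v \in C)) ->
  (forall t, (1 <= t <= n)%N -> z t = (filled e C t != filled e C t.-1)) ->
  TSM_objective n x z = #|C|%:R + (2 * n%:R)^-1 * (productive_steps e C n)%:R.
Proof.
move=> x0 zE; rewrite /TSM_objective (eq_bigr _ (fun v _ => congr1 b2q (x0 v))).
by rewrite sum_b2q_card natr_sum; congr (_ + _ * _); apply: eq_big_nat => t /zE ->.
Qed.

(* The weighted term lies in [0, 1/2], so it only breaks ties between equal
   sizes. *)
Lemma objective_le_lex (n a b s k : nat) : (s <= n)%N -> (k <= n)%N ->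
  a%:R + (2 * n%:R)^-1 * s%:R <= b%:R + (2 * n%:R)^-1 * k%:R :> rat ->
  (a <= b)%N /\ (a = b -> s <= k)%N.
Proof.
case: n => [|n] sn kn.
  by rewrite mulr0 invr0 !mul0r !addr0 ler_nat => ab; split=> // _; lia.
have c0 : (0 : rat) < 2 * n.+1%:R by rewrite mulr_gt0 ?ltr0n.
rewrite -(ler_pM2l c0) !mulrDr !mulrA mulfV ?gt_eqF // !mul1r.
rewrite -!natrM -!natrD ler_nat => H.
by split=> [|ab]; [nia | rewrite ab in H; lia].
Qed.

Theorem corollary4p5 (V : finType) (e : rel V) (He : simple_graph e)
    (x : nat -> V -> bool) (y : nat -> V -> V -> bool) (z : nat -> bool) :
  TSM_optimal e #|V|.-1 x y z ->
  let C := [set v | x 0%N v] in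
  let s := (\sum_(1 <= t < #|V|.-1.+1) z t)%N in
  [/\ min_zero_forcing_set e C, pt_graph_is e s & pt_set_is e C s].
Proof.
move=> [feas opt] C s.
have full := tsm_x_full feas.
have sE : s = productive_steps e C #|V|.-1.
  by apply: eq_big_nat => t /(tsm_z_productive feas) ->.
have x0C v : x 0%N v = (v \in C) by rewrite inE.
have objC := tsm_objective_productive x0C (tsm_z_productive feas).
have optC D : zero_forcing_set e D -> (#|C| <= #|D|)%N /\
    (#|C| = #|D| ->
     productive_steps e C #|V|.-1 <= productive_steps e D #|V|.-1)%N.
  move=> /zero_forcing_within fullD; have := opt _ _ _ (zf_feasible fullD).
  rewrite objC (@tsm_objective_productive _ e _ _ _ D) //.
  by apply: objective_le_lex; apply: productive_steps_le.
have minC : min_zero_forcing_set e C by split=> [|D /optC[]]; first by exists #|V|.-1.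
have [j ptj] := pt_set_exists full.
have ptC : pt_set_is e C s by rewrite sE (productive_steps_pt ptj full).
split=> //; split=> [|D j' [zfD minD] ptD]; first by exists C.
rewrite -(productive_steps_pt ptD (zero_forcing_within zfD)) sE.
apply: (optC D zfD).2; apply/eqP.
by rewrite eqn_leq (optC D zfD).1 minD //; case: minC.
Qed.
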